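(* Let $M\in\mathbb{N}$ and let $f$ be a meromorphic function. Then $$\min_{0\le t\le M}\nu^0_{\mathcal{A}_{q^{M-t}}\mathcal{D}_q^tf}(x)=\min_{0\le t\le M}\nu^0_{\eta_q^{M-2t}f}(x)$$ for all $x\in\mathbb{C}$ with $|x|>\mathcal{R}(M,q)$.
   Context: Fix $q\in\mathbb{C}$ with $0<|q|<1$. Every $x\in\mathbb{C}$ is written uniquely as $x=\frac{z+z^{-1}}{2}$ with $|z|\ge 1$ (when $|z|=1$, $z=x+i\sqrt{1-x^2}$). $(\eta_q f)(x)=f\big(\tfrac{q^{1/2}z+q^{-1/2}z^{-1}}{2}\big)$, $(\eta_q^{-1}f)(x)=f\big(\tfrac{q^{-1/2}z+q^{1/2}z^{-1}}{2}\big)$, $\eta_q^0f=f$, $\eta_q^{\pm k}$ the $k$-fold compositions; $(\eta_{q^{\pm k}}f)(x)=f\big(\tfrac{q^{\pm k/2}z+q^{\mp k/2}z^{-1}}{2}\big)$. $\mathcal{R}(M,q)>0$ is a constant such that for $|x|>\mathcal{R}(M,q)$ one has $\eta_q^{\pm k}f=\eta_{q^{\pm k}}f$ for $0\le k\le M$ and the shifts compose additively. Askey-Wilson operator $(\mathcal{D}_qf)(x)=\frac{(\eta_qf)(x)-(\eta_q^{-1}f)(x)}{\eta_qx-\eta_q^{-1}x}$ ($x\ne\pm1$; limit at $\pm1$), $\mathcal{D}_q^0f=f$, $\mathcal{D}_q^k=\mathcal{D}_q\circ\mathcal{D}_q^{k-1}$; $(\mathcal{A}_{q^k}f)(x)=\frac{(\eta_{q^k}f)(x)+(\eta_{q^{-k}}f)(x)}{2}$,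 $\mathcal{A}_{q^0}f=f$. $\nu^0_g(x)\ge0$ denotes the order of zero of $g$ at $x$ (zero if $g(x)\ne0$). *)

From Stdlib Require Import Reals ZArith List ClassicalEpsilon.
From Coquelicot Require Import Coquelicot.

Open Scope C_scope.

Definition CpowZ (s : C) (a : Z) : C :=
  match a with
  | Z0 => 1
  | Zpos p => s ^ (Pos.to_nat p)
  | Zneg p => / (s ^ (Pos.to_nat p))
  end.

(* x = (z + z^{-1})/2 with |z| >= 1; when |z| = 1, z = x + i sqrt(1-x^2),
   i.e. the root on the unit circle with nonnegative imaginary part. *)
Definition zspec (x z : C) : Prop :=
  z <> 0 /\ (z + / z) / 2 = x /\
  (1 < Cmod z \/ (Cmod z = 1%R /\ (0 <= Im z)%R)).

Definition zof (x : C) : C := epsilon (inhabits (RtoC 0)) (zspec x).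

(* The point (s^a z + s^{-a} z^{-1})/2, where s = q^{1/2}; so the map
   x |-> sigma s a x is the shift underlying eta_{q^{a}} *)
Definition sigma (s : C) (a : Z) (x : C) : C :=
  (CpowZ s a * zof x + CpowZ s (- a) / zof x) / 2.

Definition eta (s : C) (f : C -> C) : C -> C := fun x => f (sigma s 1 x).
Definition etainv (s : C) (f : C -> C) : C -> C := fun x => f (sigma s (-1) x).

Definition etaZ (s : C) (j : Z) (f : C -> C) : C -> C :=
  match j with
  | Z0 => f
  | Zpos p => Nat.iter (Pos.to_nat p) (eta s) f
  | Zneg p => Nat.iter (Pos.to_nat p) (etainv s) f
  end.

Definition eta_qpow (s : C) (a : Z) (f : C -> C) : C -> C :=
  fun x => f (sigma s a x).

Definition AW_quot (s : C) (f : C -> C) (x : C) : C :=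
  (eta s f x - etainv s f x) / (eta s (fun y => y) x - etainv s (fun y => y) x).

Definition AW (s : C) (f : C -> C) : C -> C :=
  fun x =>
    if excluded_middle_informative (x = 1 \/ x = - (1)) then
      epsilon (inhabits (RtoC 0)) (fun l : C => filterlim (AW_quot s f) (locally' x) (locally l))
    else AW_quot s f x.

Definition AWn (s : C) (k : nat) (f : C -> C) : C -> C := Nat.iter k (AW s) f.

Definition Aop (s : C) (k : nat) (f : C -> C) : C -> C :=
  match k with
  | O => f
  | S _ => fun x => (eta_qpow s (Z.of_nat k) f x + eta_qpow s (- Z.of_nat k) f x) / 2
  end.

Definition holo_on_disc (h : C -> C) (z : C) (r : R) : Prop :=
  forall w, (Cmod (w - z) < r)%R -> ex_derive h w.

(* Meromorphic on C (values at the isolated singularities are irrelevant):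
   around every point, some power (w-z)^k * f w agrees on a punctured disc
   with a function holomorphic on the whole disc. *)
Definition meromorphic (f : C -> C) : Prop :=
  forall z : C, exists (k : nat) (r : R) (h : C -> C),
    (0 < r)%R /\ holo_on_disc h z r /\
    forall w, (Cmod (w - z) < r)%R -> w <> z -> (w - z) ^ k * f w = h w.

Definition zero_order_ge (g : C -> C) (x : C) (n : nat) : Prop :=
  n = O \/
  exists (r : R) (h : C -> C),
    (0 < r)%R /\ holo_on_disc h x r /\
    forall w, (Cmod (w - x) < r)%R -> w <> x -> g w = (w - x) ^ n * h w.

(* nu^0_g(x) in N U {oo}, represented as option nat (None = +oo, which only
   happens when g vanishes identically near x). *)
Definition nu0 (g : C -> C) (x : C) : option nat :=
  epsilon (inhabits None) (fun o =>
    match o with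
    | Some n => zero_order_ge g x n /\ ~ zero_order_ge g x (S n)
    | None => forall n, zero_order_ge g x n
    end).

Definition omin (a b : option nat) : option nat :=
  match a, b with
  | None, _ => b
  | _, None => a
  | Some m, Some n => Some (Nat.min m n)
  end.

Definition min_upto (M : nat) (F : nat -> option nat) : option nat :=
  fold_right omin None (map F (seq 0 (S M))).

(* The defining property of the constant R(M,q): for |x| > R,
   eta_q^{+-k} f = eta_{q^{+-k}} f for 0 <= k <= M, and the shifts compose
   additively: eta_{q^a} eta_{q^b} f = eta_{q^{a+b}} f for |a|,|b| <= M. *)
Definition R_admissible (s : C) (M : nat) (Rc : R) : Prop :=
  (0 < Rc)%R /\
  forall (f : C -> C) (x : C), (Rc < Cmod x)%R ->
    (forall k : nat, (k <= M)%nat ->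
       etaZ s (Z.of_nat k) f x = eta_qpow s (Z.of_nat k) f x /\
       etaZ s (- Z.of_nat k) f x = eta_qpow s (- Z.of_nat k) f x) /\
    (forall a b : Z, (Z.abs a <= Z.of_nat M)%Z -> (Z.abs b <= Z.of_nat M)%Z ->
       eta_qpow s a (eta_qpow s b f) x = eta_qpow s (a + b) f x).

(* Write g_k for eta_q^k g.  For |x| > R(M,q) the shifted points x_k = eta_q^k x (|k| < M)
   avoid 1 and -1 and depend holomorphically on x, so (D_q g)_k is the divided difference of
   g_{k+1} and g_{k-1} with the nonvanishing holomorphic denominator x_{k+1} - x_{k-1}.
   Hence A_{q^m} g = (g_m + g_{-m})/2 and the (D_q g)_{m-1-2j} determine the g_{m-2j}
   (0 <= j <= m) through a triangular system with holomorphic coefficients, so the former all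
   vanish to order >= n at x iff the latter do.  Induction on m, applied to D_q g, shows for
   every n that all A_{q^{M-t}} D_q^t f vanish to order >= n at x iff all f_{M-2t} do. *)

From Pilot Require Import Defs.
From Stdlib Require Import Reals ZArith List Lia Lra Psatz ClassicalEpsilon Classical.
From Coquelicot Require Import Coquelicot.
(* [Reals] also exports a [sigma]; re-import [Defs] so that its [sigma] takes precedence. *)
Import Pilot.Defs.
Open Scope C_scope.

Lemma Cmult_integral (a b : C) : a * b = 0 -> a = 0 \/ b = 0.
Proof.
  intros E. assert (Hm : (Cmod a * Cmod b = 0)%R) by (rewrite <- Cmod_mult, E; apply Cmod_0).
  destruct (Rmult_integral _ _ Hm); [left|right]; apply Cmod_eq_0; assumption.
Qed.

Lemma Cmod_sub_ge (a b : C) : (Cmod a - Cmod b <= Cmod (a - b))%R.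
Proof.
  pose proof (Cmod_triangle (a - b) b) as H. replace (a - b + b) with a in H by ring. lra.
Qed.

Lemma Cmod_eq_1_of_sqr_1 (e : C) : e * e = 1 -> Cmod e = 1%R.
Proof.
  intros E. pose proof (Cmod_mult e e) as H. rewrite E, Cmod_1 in H.
  pose proof (Cmod_ge_0 e). nra.
Qed.

Lemma Csqrt_exists (c : C) : exists r : C, r * r = c.
Proof.
  destruct c as [a b].
  set (m := sqrt (a ^ 2 + b ^ 2)).
  assert (Hm0 : (0 <= m)%R) by apply sqrt_pos.
  assert (Hm2 : (m * m = a * a + b * b)%R) by (unfold m; rewrite sqrt_sqrt by nra; ring).
  set (u := sqrt ((m + a) / 2)). set (v := sqrt ((m - a) / 2)).
  assert (Hu : (u * u = (m + a) / 2)%R) by (apply sqrt_sqrt; nra).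
  assert (Hv : (v * v = (m - a) / 2)%R) by (apply sqrt_sqrt; nra).
  assert (Hu0 : (0 <= u)%R) by apply sqrt_pos.
  assert (Hv0 : (0 <= v)%R) by apply sqrt_pos.
  assert (Huv : ((u * v) * (u * v) = (b / 2) * (b / 2))%R).
  { replace ((u * v) * (u * v))%R with ((u * u) * (v * v))%R by ring. rewrite Hu, Hv. nra. }
  assert (Huv0 : (0 <= u * v)%R) by nra.
  destruct (Rle_dec 0 b) as [Hb|Hb].
  - exists (u, v). unfold Cmult; simpl. f_equal; nra.
  - exists (u, - v)%R. unfold Cmult; simpl. f_equal; nra.
Qed.

(** * Complex differentiability *)

Lemma is_derive_of_quadratic_bound (f : C -> C) (x l : C) (d K : R) :
  (0 < d)%R ->
  (forall w, (Cmod (w - x) < d)%R ->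
     (Cmod (f w - f x - (w - x) * l) <= K * (Cmod (w - x) * Cmod (w - x)))%R) ->
  is_derive f x l.
Proof.
  intros Hd HK. split; [apply is_linear_scal_l|].
  intros x' Hx'.
  assert (Ex : x = x')
    by exact (@is_filter_lim_locally_unique C_AbsRing (AbsRing_NormedModule C_AbsRing) _ _ Hx').
  subst x'. intros eps.
  assert (Hr : (0 < Rmin d (eps / (Rabs K + 1)))%R).
  { apply Rmin_pos; [exact Hd|]. apply Rdiv_lt_0_compat; [apply cond_pos|].
    pose proof (Rabs_pos K); lra. }
  eapply filter_imp;
    [|apply (@locally_ball_norm C_AbsRing (AbsRing_NormedModule C_AbsRing) x (mkposreal _ Hr))].
  intros w Hw. unfold ball_norm in Hw. simpl in Hw.
  change (Cmod (f w - f x - (w - x) * l) <= eps * Cmod (w - x))%R.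
  change (Cmod (w - x) < Rmin d (eps / (Rabs K + 1)))%R in Hw.
  pose proof (Rmin_l d (eps / (Rabs K + 1))). pose proof (Rmin_r d (eps / (Rabs K + 1))).
  specialize (HK w ltac:(lra)).
  assert (H4 : (Cmod (w - x) * (Rabs K + 1) < eps)%R).
  { assert (Hw' : (Cmod (w - x) < eps / (Rabs K + 1))%R) by lra.
    pose proof (Rabs_pos K).
    apply (Rmult_lt_compat_r (Rabs K + 1)) in Hw'; [|lra].
    unfold Rdiv in Hw'. rewrite Rmult_assoc, Rinv_l, Rmult_1_r in Hw' by lra. exact Hw'. }
  pose proof (Cmod_ge_0 (w - x)). pose proof (Rle_abs K). pose proof (cond_pos eps). nra.
Qed.

(* Coquelicot's product and chain rules use the normed module [AbsRing_NormedModule C_AbsRing],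
   whereas [holo_on_disc] uses [C_NormedModule]; only the linearity component differs. *)
Lemma ex_derive_C_iff (f : C -> C) (w : C) :
  ex_derive f w <-> @ex_derive C_AbsRing (AbsRing_NormedModule C_AbsRing) f w.
Proof.
  split; intros [a [_ Ha]]; exists a; (split; [apply is_linear_scal_l|exact Ha]).
Qed.

Lemma ex_derive_Cmult (f g : C -> C) (w : C) :
  ex_derive f w -> ex_derive g w -> ex_derive (fun y => f y * g y) w.
Proof.
  intros Hf Hg.
  destruct (proj1 (ex_derive_C_iff f w) Hf) as [a Ha].
  destruct (proj1 (ex_derive_C_iff g w) Hg) as [b Hb].
  assert (Hcomm : forall n m : C_AbsRing, mult n m = mult m n) by (intros; apply Cmult_comm).
  destruct (is_derive_mult f g w a b Ha Hb Hcomm) as [_ H].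
  eexists. split; [apply is_linear_scal_l|exact H].
Qed.

Lemma ex_derive_Cinv (u : C) : u <> 0 -> ex_derive Cinv u.
Proof.
  intros Hu. pose proof (proj1 (Cmod_gt_0 u) Hu) as Hm.
  exists (- / (u * u)).
  apply (is_derive_of_quadratic_bound _ _ _ (Cmod u / 2) (2 / (Cmod u * Cmod u * Cmod u)));
    [lra|].
  intros w Hw.
  assert (Hw2 : (Cmod u / 2 <= Cmod w)%R).
  { pose proof (Cmod_sub_ge u (u - w)) as H. replace (u - (u - w)) with w in H by ring.
    rewrite <- Cmod_opp in Hw. replace (- (w - u)) with (u - w) in Hw by ring. lra. }
  assert (Hw0 : w <> 0) by (intros ->; rewrite Cmod_0 in Hw2; lra).
  replace (/ w - / u - (w - u) * - / (u * u)) with ((w - u) * (w - u) / (w * u * u))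
    by (field; auto).
  rewrite Cmod_div by (repeat apply Cmult_neq_0; auto). rewrite !Cmod_mult.
  pose proof (Cmod_ge_0 (w - u)).
  apply (Rle_trans _ ((Cmod (w - u) * Cmod (w - u)) / (Cmod u / 2 * Cmod u * Cmod u))).
  - apply Rmult_le_compat_l; [nra|]. apply Rinv_le_contravar.
    + repeat apply Rmult_lt_0_compat; lra.
    + repeat apply Rmult_le_compat_r; lra.
  - right. field. lra.
Qed.

Lemma ex_derive_Cinv_comp (f : C -> C) (w : C) :
  ex_derive f w -> f w <> 0 -> ex_derive (fun y => / f y) w.
Proof.
  intros Hf Hw. apply (ex_derive_comp Cinv f);
    [apply ex_derive_Cinv, Hw|apply ex_derive_C_iff, Hf].
Qed.

Lemma holo_on_disc_le (h : C -> C) (x : C) (r r' : R) :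
  holo_on_disc h x r -> (r' <= r)%R -> holo_on_disc h x r'.
Proof. intros H Hr w Hw. apply H. lra. Qed.

Lemma holo_on_disc_const (c x : C) (r : R) : holo_on_disc (fun _ => c) x r.
Proof. intros w _. apply ex_derive_const. Qed.

(** * Orders of zeros *)

Lemma zero_order_ge_near_ext (g g' : C -> C) (x : C) (n : nat) (r : R) : (0 < r)%R ->
  (forall w, (Cmod (w - x) < r)%R -> w <> x -> g w = g' w) ->
  zero_order_ge g x n -> zero_order_ge g' x n.
Proof.
  intros Hr He [->|[r1 [h [Hr1 [Hh Heq]]]]]; [left; reflexivity|right].
  pose proof (Rmin_l r r1). pose proof (Rmin_r r r1).
  exists (Rmin r r1), h. split; [apply Rmin_pos; assumption|split].
  - exact (holo_on_disc_le h x r1 _ Hh (Rmin_r r r1)).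
  - intros w Hw Hne. rewrite <- He by (auto; lra). apply Heq; auto; lra.
Qed.

Lemma zero_order_ge_near_iff (g g' : C -> C) (x : C) (n : nat) (r : R) : (0 < r)%R ->
  (forall w, (Cmod (w - x) < r)%R -> w <> x -> g w = g' w) ->
  (zero_order_ge g x n <-> zero_order_ge g' x n).
Proof.
  intros Hr He. split; apply (zero_order_ge_near_ext _ _ x n r Hr); [exact He|].
  intros w Hw Hne. symmetry. exact (He w Hw Hne).
Qed.

Lemma zero_order_ge_ext (g g' : C -> C) (x : C) (n : nat) :
  (forall w, g w = g' w) -> zero_order_ge g x n -> zero_order_ge g' x n.
Proof. intros He. apply (zero_order_ge_near_ext _ _ x n 1); [lra|]. intros w _ _. apply He. Qed.

Lemma zero_order_ge_const0 (x : C) (n : nat) : zero_order_ge (fun _ => 0) x n.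
Proof.
  destruct n as [|n]; [left; reflexivity|right].
  exists 1%R, (fun _ => 0). split; [lra|split; [apply holo_on_disc_const|intros; ring]].
Qed.

Lemma zero_order_ge_plus (g1 g2 : C -> C) (x : C) (n : nat) :
  zero_order_ge g1 x n -> zero_order_ge g2 x n -> zero_order_ge (fun w => g1 w + g2 w) x n.
Proof.
  intros [->|[r1 [h1 [Hr1 [Hh1 Heq1]]]]]; [left; reflexivity|].
  intros [->|[r2 [h2 [Hr2 [Hh2 Heq2]]]]]; [left; reflexivity|right].
  pose proof (Rmin_l r1 r2). pose proof (Rmin_r r1 r2).
  exists (Rmin r1 r2), (fun w => h1 w + h2 w). split; [apply Rmin_pos; assumption|split].
  - intros w Hw. apply (ex_derive_plus h1 h2); [apply Hh1|apply Hh2]; lra.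
  - intros w Hw Hne. rewrite Heq1, Heq2 by (auto; lra). ring.
Qed.

Lemma zero_order_ge_mul_holo (a g : C -> C) (x : C) (n : nat) (r : R) :
  (0 < r)%R -> holo_on_disc a x r ->
  zero_order_ge g x n -> zero_order_ge (fun w => a w * g w) x n.
Proof.
  intros Hr Ha [->|[r1 [h1 [Hr1 [Hh1 Heq1]]]]]; [left; reflexivity|right].
  pose proof (Rmin_l r r1). pose proof (Rmin_r r r1).
  exists (Rmin r r1), (fun w => a w * h1 w). split; [apply Rmin_pos; assumption|split].
  - intros w Hw. apply ex_derive_Cmult; [apply Ha|apply Hh1]; lra.
  - intros w Hw Hne. rewrite Heq1 by (auto; lra). ring.
Qed.

Lemma zero_order_ge_scal (c : C) (g : C -> C) (x : C) (n : nat) :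
  zero_order_ge g x n -> zero_order_ge (fun w => c * g w) x n.
Proof. apply (zero_order_ge_mul_holo (fun _ => c) g x n 1); [lra|apply holo_on_disc_const]. Qed.

Lemma zero_order_ge_pred (g : C -> C) (x : C) (n : nat) :
  zero_order_ge g x (S n) -> zero_order_ge g x n.
Proof.
  intros [H|[r [h [Hr [Hh Heq]]]]]; [discriminate|].
  destruct n as [|n]; [left; reflexivity|right].
  exists r, (fun w => (w - x) * h w). split; [exact Hr|split].
  - intros w Hw. apply ex_derive_Cmult; [|exact (Hh w Hw)].
    apply ex_derive_C_iff, (ex_derive_minus (fun y => y) (fun _ => x));
      [apply ex_derive_id|apply ex_derive_const].
  - intros w Hw Hne. rewrite Heq by assumption. simpl. ring.
Qed.

Lemma zero_order_ge_le (g : C -> C) (x : C) (n m : nat) :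
  (m <= n)%nat -> zero_order_ge g x n -> zero_order_ge g x m.
Proof. induction 1; auto using zero_order_ge_pred. Qed.

Definition ord_ge (o : option nat) (n : nat) : Prop :=
  match o with None => True | Some m => (n <= m)%nat end.

Lemma ord_ge_inj (o1 o2 : option nat) : (forall n, ord_ge o1 n <-> ord_ge o2 n) -> o1 = o2.
Proof.
  intros H. destruct o1 as [m|], o2 as [k|]; simpl in H.
  - f_equal. pose proof (proj1 (H m) (le_n m)). pose proof (proj2 (H k) (le_n k)). lia.
  - pose proof (proj2 (H (S m)) I). lia.
  - pose proof (proj1 (H (S k)) I). lia.
  - reflexivity.
Qed.

Lemma ord_ge_nu0 (g : C -> C) (x : C) (n : nat) : ord_ge (nu0 g x) n <-> zero_order_ge g x n.
Proof.
  unfold nu0.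
  match goal with |- ord_ge (epsilon ?i ?P) _ <-> _ =>
    assert (HP : P (epsilon i P)); [apply epsilon_spec|] end.
  - destruct (classic (forall n, zero_order_ge g x n)) as [Hall|Hn]; [exists None; exact Hall|].
    apply not_all_ex_not in Hn. destruct Hn as [k Hk].
    induction k as [|k IH]; [exfalso; apply Hk; left; reflexivity|].
    destruct (classic (zero_order_ge g x k)) as [H|H]; [exists (Some k); split|]; auto.
  - destruct (epsilon _ _) as [m|]; simpl in *; [|split; auto].
    destruct HP as [Hm HSm]. split; intro H; [exact (zero_order_ge_le g x m n H Hm)|].
    destruct (le_lt_dec n m) as [|Hlt]; [assumption|].
    exfalso. apply HSm. exact (zero_order_ge_le g x n (S m) Hlt H).
Qed.

Lemma ord_ge_min_upto (M : nat) (F : nat -> option nat) (n : nat) :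
  ord_ge (min_upto M F) n <-> (forall t, (t <= M)%nat -> ord_ge (F t) n).
Proof.
  assert (Hfold : forall l, ord_ge (fold_right omin None l) n <-> (forall o, In o l -> ord_ge o n)).
  { induction l as [|a l IH]; simpl; [split; [intros _ o []|auto]|].
    assert (Homin : forall b, ord_ge (omin a b) n <-> ord_ge a n /\ ord_ge b n)
      by (intros b; destruct a, b; simpl; rewrite ?Nat.min_glb_iff; tauto).
    rewrite Homin, IH. split; [intros [Ha Hl] o [<-|Ho]; auto|intros H; split; auto]. }
  unfold min_upto. rewrite Hfold. split.
  - intros H t Ht. apply H, in_map, in_seq. lia.
  - intros H o Ho. apply in_map_iff in Ho. destruct Ho as [t [<- Ht]].
    apply in_seq in Ht. apply H. lia.
Qed.

Lemma min_upto_nu0_eq (M : nat) (F G : nat -> C -> C) (x : C) :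
  (forall n, (forall t, (t <= M)%nat -> zero_order_ge (F t) x n) <->
             (forall t, (t <= M)%nat -> zero_order_ge (G t) x n)) ->
  min_upto M (fun t => nu0 (F t) x) = min_upto M (fun t => nu0 (G t) x).
Proof.
  intros H. apply ord_ge_inj. intros n. rewrite !ord_ge_min_upto.
  setoid_rewrite ord_ge_nu0. apply H.
Qed.

Lemma zero_order_ge_divided_differences (P d : nat -> C -> C) (N : nat) (x : C) (r : R) (n : nat) :
  (0 < r)%R ->
  (forall j, (j < N)%nat -> holo_on_disc (d j) x r) ->
  (forall j w, (j < N)%nat -> (Cmod (w - x) < r)%R -> d j w <> 0) ->
  (zero_order_ge (fun w => (P 0%nat w + P N w) / 2) x n /\
   forall j, (j < N)%nat -> zero_order_ge (fun w => (P j w - P (S j) w) / d j w) x n)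
  <-> (forall j, (j <= N)%nat -> zero_order_ge (P j) x n).
Proof.
  intros Hr Hd Hd0.
  assert (Hinv : forall j, (j < N)%nat -> holo_on_disc (fun w => / d j w) x r).
  { intros j Hj w Hw. apply ex_derive_Cinv_comp; [apply Hd|apply Hd0]; assumption. }
  split.
  - intros [Havg Hdiv].
    assert (Hstep : forall j, (j < N)%nat -> zero_order_ge (fun w => P j w - P (S j) w) x n).
    { intros j Hj.
      apply (zero_order_ge_near_ext (fun w => d j w * ((P j w - P (S j) w) / d j w)) _ x n r Hr).
      - intros w Hw _. field. apply Hd0; assumption.
      - apply (zero_order_ge_mul_holo (d j) _ x n r Hr (Hd j Hj)), Hdiv, Hj. }
    assert (Hcum : forall j, (j <= N)%nat -> zero_order_ge (fun w => P 0%nat w - P j w) x n).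
    { induction j as [|j IH]; intros Hj.
      - apply (zero_order_ge_ext (fun _ => 0)); [intros; ring|apply zero_order_ge_const0].
      - apply (zero_order_ge_ext (fun w => (P 0%nat w - P j w) + (P j w - P (S j) w)));
          [intros; ring|].
        apply zero_order_ge_plus; [apply IH; lia|apply Hstep; lia]. }
    assert (H0 : zero_order_ge (P 0%nat) x n).
    { apply (zero_order_ge_ext (fun w => (P 0%nat w + P N w) / 2 + / 2 * (P 0%nat w - P N w)));
        [intros; field|].
      apply zero_order_ge_plus, zero_order_ge_scal, Hcum; auto. }
    intros j Hj.
    apply (zero_order_ge_ext (fun w => P 0%nat w + (-1) * (P 0%nat w - P j w))); [intros; ring|].
    apply zero_order_ge_plus, zero_order_ge_scal, Hcum; assumption.
  - intros HP. split.
    + apply (zero_order_ge_ext (fun w => / 2 * (P 0%nat w + P N w))); [intros; unfold Cdiv; ring|].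
      apply zero_order_ge_scal, zero_order_ge_plus; apply HP; lia.
    + intros j Hj.
      apply (zero_order_ge_ext (fun w => / d j w * (P j w + (-1) * P (S j) w)));
        [intros; unfold Cdiv; ring|].
      apply (zero_order_ge_mul_holo _ _ x n r Hr (Hinv j Hj)).
      apply zero_order_ge_plus, zero_order_ge_scal; apply HP; lia.
Qed.

(** * The Joukowski coordinate *)

Lemma joukowski_eq_cases (u a : C) : u <> 0 -> a <> 0 ->
  (u + / u) / 2 = (a + / a) / 2 -> u = a \/ u = / a.
Proof.
  intros Hu Ha E.
  assert (E2 : (u - a) * (u - / a) = 0).
  { replace ((u - a) * (u - / a)) with (u * 2 * ((u + / u) / 2 - (a + / a) / 2))
      by (field; auto).
    rewrite E. ring. }
  destruct (Cmult_integral _ _ E2) as [E3|E3]; [left|right];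
    [transitivity (u - a + a)|transitivity (u - / a + / a)]; [ring|rewrite E3; ring|ring|rewrite E3; ring].
Qed.

Lemma zspec_exists (x : C) : exists z, zspec x z.
Proof.
  destruct (Csqrt_exists (x * x - 1)) as [r Hr].
  set (z1 := x + r). set (z2 := x - r).
  assert (H12 : z1 * z2 = 1)
    by (unfold z1, z2; replace ((x + r) * (x - r)) with (x * x - r * r) by ring; rewrite Hr; ring).
  assert (Hz1 : z1 <> 0) by (intro E; rewrite E, Cmult_0_l in H12; exact (C1_nz (eq_sym H12))).
  assert (Hz2 : z2 <> 0) by (intro E; rewrite E, Cmult_0_r in H12; exact (C1_nz (eq_sym H12))).
  assert (Hi1 : / z1 = z2)
    by (replace z2 with (z1 * z2 * / z1) by (field; exact Hz1); rewrite H12; ring).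
  assert (Hi2 : / z2 = z1)
    by (replace z1 with (z1 * z2 * / z2) by (field; exact Hz2); rewrite H12; ring).
  assert (Hs1 : (z1 + / z1) / 2 = x) by (rewrite Hi1; unfold z1, z2; field).
  assert (Hs2 : (z2 + / z2) / 2 = x) by (rewrite Hi2; unfold z1, z2; field).
  assert (Hm : (Cmod z1 * Cmod z2 = 1)%R) by (rewrite <- Cmod_mult, H12; apply Cmod_1).
  pose proof (Cmod_ge_0 z1). pose proof (Cmod_ge_0 z2).
  destruct (Rlt_le_dec 1 (Cmod z1)) as [G|G]; [exists z1; split; auto|].
  destruct (Rle_lt_or_eq_dec _ _ G) as [G2|G2]; [exists z2; repeat split; auto; left; nra|].
  destruct (Rle_dec 0 (Im z1)) as [I1|I1]; [exists z1; split; auto|].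
  (* on the unit circle the two roots are conjugate, so one has nonnegative imaginary part *)
  exists z2. repeat split; auto. right. split; [nra|].
  assert (Ec : z2 = Cconj z1).
  { pose proof (Cmod2_conj z1) as Hc. rewrite G2, pow1 in Hc.
    rewrite <- Hi1. replace (Cconj z1) with (z1 * Cconj z1 * / z1) by (field; exact Hz1).
    rewrite <- Hc. ring. }
  rewrite Ec. unfold Im, Cconj in *. simpl in *. lra.
Qed.

Lemma zof_spec (x : C) : zspec x (zof x).
Proof. unfold zof. apply epsilon_spec, zspec_exists. Qed.

Lemma zof_neq_0 (x : C) : zof x <> 0.
Proof. apply (zof_spec x). Qed.

Lemma joukowski_zof (x : C) : (zof x + / zof x) / 2 = x.
Proof. apply (zof_spec x). Qed.

Lemma Cmod_zof_ge_1 (x : C) : (1 <= Cmod (zof x))%R.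
Proof. destruct (zof_spec x) as [_ [_ [H|[H _]]]]; lra. Qed.

Lemma zof_of_sqr_1 (e : C) : e * e = 1 -> zof e = e.
Proof.
  intros E. assert (He : e <> 0) by (intros ->; rewrite Cmult_0_l in E; exact (C1_nz (eq_sym E))).
  assert (Hie : / e = e) by (replace (/ e) with (e * e * / e) by (rewrite E; ring); field; exact He).
  assert (Hq : (zof e + / zof e) / 2 = (e + / e) / 2) by (rewrite joukowski_zof, Hie; field).
  destruct (joukowski_eq_cases _ _ (zof_neq_0 e) He Hq) as [H|H]; [exact H|rewrite H; exact Hie].
Qed.

Lemma sigma_0 (s w : C) : sigma s 0 w = w.
Proof. unfold sigma; simpl. rewrite <- (joukowski_zof w) at 3. field. apply zof_neq_0. Qed.

Lemma Cmod_lt_1_neq_1 (a : C) : (Cmod a < 1)%R -> a <> 1.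
Proof. intros H ->. rewrite Cmod_1 in H. lra. Qed.

Lemma lipschitz_ratio_bound (a e b t : R) : (0 <= a)%R -> (0 <= e)%R -> (1 < b <= t)%R ->
  (a * (t - 1) <= 2 * e * t)%R -> (a <= 2 * b / (b - 1) * e)%R.
Proof.
  intros Ha He [Hb Ht] H.
  assert (Hab : (a * (b - 1) <= 2 * e * b)%R) by (apply (Rmult_le_reg_r t); [lra|nra]).
  apply (Rmult_le_reg_r (b - 1)); [lra|].
  replace (2 * b / (b - 1) * e * (b - 1))%R with (2 * e * b)%R by (field; lra). exact Hab.
Qed.

Lemma joukowski_sub (z z0 : C) : z <> 0 -> z0 <> 0 ->
  (z - z0) * (z * z0 - 1) = 2 * ((z + / z) / 2 - (z0 + / z0) / 2) * z * z0.
Proof. intros Hz Hz0. field. auto. Qed.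

Lemma joukowski_inv_lipschitz (z z0 : C) : (1 < Cmod z)%R -> (1 < Cmod z0)%R ->
  (Cmod (z - z0) <= 2 * Cmod z0 / (Cmod z0 - 1) * Cmod ((z + / z) / 2 - (z0 + / z0) / 2))%R.
Proof.
  intros Hz Hz0.
  assert (Hn : z <> 0 /\ z0 <> 0) by (split; apply Cmod_gt_0; lra).
  apply (lipschitz_ratio_bound _ _ _ (Cmod z * Cmod z0)); [apply Cmod_ge_0|apply Cmod_ge_0|nra|].
  pose proof (Cmod_sub_ge (z * z0) 1) as Hg. rewrite Cmod_1, Cmod_mult in Hg.
  apply (Rle_trans _ (Cmod (z - z0) * Cmod (z * z0 - 1)));
    [apply Rmult_le_compat_l; [apply Cmod_ge_0|exact Hg]|].
  right. rewrite <- Cmod_mult, joukowski_sub by apply Hn.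
  rewrite !Cmod_mult, Cmod_R, Rabs_pos_eq by lra. ring.
Qed.

Lemma Cmod_gt_of_disc (x w : C) (Rc : R) : (Cmod (w - x) < Cmod x - Rc)%R -> (Rc < Cmod w)%R.
Proof.
  intros H. pose proof (Cmod_sub_ge x (x - w)) as H'. replace (x - (x - w)) with w in H' by ring.
  rewrite <- Cmod_opp in H. replace (- (w - x)) with (x - w) in H by ring. lra.
Qed.

Section Shifts.
Variables (s : C) (M : nat) (Rc : R).
Hypothesis Hs : (Cmod s < 1)%R.
Hypothesis Hs0 : s <> 0.
Hypothesis HR : R_admissible s M Rc.

Lemma sigma_1 (y : C) : sigma s 1 y = (s * zof y + / (s * zof y)) / 2.
Proof. unfold sigma; simpl. field. split; [apply zof_neq_0|exact Hs0]. Qed.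

Lemma sigma_m1 (y : C) : sigma s (-1) y = (/ s * zof y + s / zof y) / 2.
Proof. unfold sigma; simpl. field. split; [apply zof_neq_0|exact Hs0]. Qed.

Lemma sigma_comp (w : C) (a b : Z) : (Rc < Cmod w)%R ->
  (Z.abs a <= Z.of_nat M)%Z -> (Z.abs b <= Z.of_nat M)%Z ->
  sigma s b (sigma s a w) = sigma s (a + b) w.
Proof. intros Hw Ha Hb. exact (proj2 (proj2 HR (fun y => y) w Hw) a b Ha Hb). Qed.

Lemma zof_sigma_1 (y : C) : Cmod (zof y) = 1%R -> zof (sigma s 1 y) = / (s * zof y).
Proof.
  intros Hz. set (z := zof y) in *.
  assert (Hsz : s * z <> 0) by (apply Cmult_neq_0; [exact Hs0|apply zof_neq_0]).
  assert (Hq : (zof (sigma s 1 y) + / zof (sigma s 1 y)) / 2 = (s * z + / (s * z)) / 2)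
    by (rewrite joukowski_zof; apply sigma_1).
  destruct (joukowski_eq_cases _ _ (zof_neq_0 _) Hsz Hq) as [E|E]; [|exact E].
  pose proof (Cmod_zof_ge_1 (sigma s 1 y)) as H1.
  rewrite E, Cmod_mult, Hz in H1. lra.
Qed.

(* Otherwise eta_q^{-1} would undo eta_q at y = sigma s k w, which by [zof_sigma_1] forces
   (1 - q) (1 - q z^2) = 0 with |z| = 1 and |q| < 1. *)
Lemma Cmod_zof_sigma_neq_1 (w : C) (k : Z) : (Rc < Cmod w)%R -> (Z.abs k + 1 <= Z.of_nat M)%Z ->
  Cmod (zof (sigma s k w)) <> 1%R.
Proof.
  intros Hw Hk Hz. set (y := sigma s k w) in *. set (z := zof y) in *.
  assert (Hz0 : z <> 0) by apply zof_neq_0.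
  assert (Hback : sigma s (-1) (sigma s 1 y) = y).
  { unfold y. rewrite (sigma_comp w k 1), (sigma_comp w (k + 1) (-1)) by (auto; lia).
    f_equal. ring. }
  rewrite sigma_m1, zof_sigma_1 in Hback by exact Hz.
  fold z in Hback.
  assert (E : (1 - s * s) * (1 - s * s * z * z) = 0).
  { replace ((1 - s * s) * (1 - s * s * z * z)) with
      (2 * s * s * z * ((/ s * / (s * z) + s / / (s * z)) / 2 - (z + / z) / 2))
      by (field; auto).
    rewrite Hback. unfold z. rewrite joukowski_zof. ring. }
  pose proof (Cmod_ge_0 s).
  assert (Hss : (Cmod (s * s) < 1)%R) by (rewrite Cmod_mult; nra).
  assert (Hssz : (Cmod (s * s * z * z) < 1)%R) by (rewrite !Cmod_mult, Hz; nra).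
  destruct (Cmult_integral _ _ E) as [E'|E'];
    [apply (Cmod_lt_1_neq_1 _ Hss)|apply (Cmod_lt_1_neq_1 _ Hssz)];
    [replace (s * s) with (1 - (1 - s * s)) by ring
    |replace (s * s * z * z) with (1 - (1 - s * s * z * z)) by ring];
    rewrite E'; ring.
Qed.

Lemma Cmod_zof_gt_1 (w : C) : (1 <= M)%nat -> (Rc < Cmod w)%R -> (1 < Cmod (zof w))%R.
Proof.
  intros HM Hw. destruct (Rle_lt_or_eq_dec _ _ (Cmod_zof_ge_1 w)) as [H|H]; [exact H|].
  exfalso. apply (Cmod_zof_sigma_neq_1 w 0 Hw); [lia|]. rewrite sigma_0. auto.
Qed.

Lemma sigma_neq_sqr_1 (w : C) (k : Z) (e : C) : (Rc < Cmod w)%R ->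
  (Z.abs k + 1 <= Z.of_nat M)%Z -> e * e = 1 -> sigma s k w <> e.
Proof.
  intros Hw Hk He E. apply (Cmod_zof_sigma_neq_1 w k Hw Hk).
  rewrite E, zof_of_sqr_1 by exact He. apply Cmod_eq_1_of_sqr_1, He.
Qed.

Lemma sigma_succ_sub_pred_neq_0 (w : C) (k : Z) : (Rc < Cmod w)%R ->
  (Z.abs k + 1 <= Z.of_nat M)%Z -> sigma s (k + 1) w - sigma s (k + -1) w <> 0.
Proof.
  intros Hw Hk E.
  rewrite <- (sigma_comp w k 1), <- (sigma_comp w k (-1)), sigma_1, sigma_m1 in E by (auto; lia).
  set (z := zof (sigma s k w)) in E.
  assert (Hz0 : z <> 0) by apply zof_neq_0.
  assert (E2 : (s * s - 1) * (z * z - 1) = 0).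
  { replace ((s * s - 1) * (z * z - 1)) with
      (2 * s * z * ((s * z + / (s * z)) / 2 - (/ s * z + s / z) / 2)) by (field; auto).
    rewrite E. ring. }
  destruct (Cmult_integral _ _ E2) as [H|H].
  - apply (Cmod_lt_1_neq_1 (s * s)); [rewrite Cmod_mult; pose proof (Cmod_ge_0 s); nra|].
    replace (s * s) with (s * s - 1 + 1) by ring. rewrite H. ring.
  - apply (Cmod_zof_sigma_neq_1 w k Hw Hk), Cmod_eq_1_of_sqr_1.
    fold z. replace (z * z) with (z * z - 1 + 1) by ring. rewrite H. ring.
Qed.

Lemma AW_sigma (w : C) (k : Z) (g : C -> C) : (Rc < Cmod w)%R -> (Z.abs k + 1 <= Z.of_nat M)%Z ->
  AW s g (sigma s k w) =
  (g (sigma s (k + 1) w) - g (sigma s (k + -1) w)) / (sigma s (k + 1) w - sigma s (k + -1) w).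
Proof.
  intros Hw Hk. unfold AW.
  destruct (excluded_middle_informative _) as [[E|E]|_].
  - exfalso. apply (sigma_neq_sqr_1 w k 1 Hw Hk); [ring|exact E].
  - exfalso. apply (sigma_neq_sqr_1 w k (- (1)) Hw Hk); [ring|exact E].
  - unfold AW_quot, eta, etainv. rewrite !sigma_comp by (auto; lia). reflexivity.
Qed.

(* Off the unit circle zof is a branch of the inverse of the Joukowski map, whose
   derivative (1 - z^-2)/2 does not vanish there. *)
Lemma is_derive_zof (w0 : C) : (1 <= M)%nat -> (Rc < Cmod w0)%R ->
  is_derive zof w0 (2 * zof w0 * zof w0 / (zof w0 * zof w0 - 1)).
Proof.
  intros HM Hw0. pose proof (Cmod_zof_gt_1 w0 HM Hw0) as Hb.
  set (z0 := zof w0) in *. set (b := Cmod z0) in *.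
  assert (Hz00 : z0 <> 0) by apply zof_neq_0.
  assert (Hc : z0 * z0 - 1 <> 0).
  { intro E. assert (Hb1 : b = 1%R); [|lra].
    apply Cmod_eq_1_of_sqr_1. replace (z0 * z0) with (z0 * z0 - 1 + 1) by ring. rewrite E. ring. }
  set (c := Cmod (z0 * z0 - 1)).
  assert (Hc0 : (0 < c)%R) by (apply Cmod_gt_0; exact Hc).
  set (L := (2 * b / (b - 1))%R).
  apply (is_derive_of_quadratic_bound _ _ _ (Cmod w0 - Rc) (L * L / c)); [lra|].
  intros w Hw. pose proof (Cmod_zof_gt_1 w HM (Cmod_gt_of_disc w0 w Rc Hw)) as Hzb.
  pose proof (joukowski_inv_lipschitz _ _ Hzb Hb) as HaL.
  pose proof (joukowski_sub (zof w) z0 (zof_neq_0 w) Hz00) as I1.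
  pose proof (joukowski_zof w0) as Hjw0. fold z0 in Hjw0.
  rewrite joukowski_zof, Hjw0 in HaL, I1. fold b L in HaL.
  change (zof w0) with z0. set (z := zof w) in *. clearbody z z0.
  assert (Hzz : z * z0 - 1 <> 0).
  { intro E. assert (Hzz1 : (Cmod z * b = 1)%R).
    { unfold b. rewrite <- Cmod_mult, <- Cmod_1. f_equal.
      replace (z * z0) with (z * z0 - 1 + 1) by ring. rewrite E. ring. }
    nra. }
  assert (Hz0 : z <> 0) by (apply Cmod_gt_0; lra).
  assert (Erem : z - z0 - (w - w0) * (2 * z0 * z0 / (z0 * z0 - 1))
                 = - ((z - z0) * (z - z0)) / (z * (z0 * z0 - 1))).
  { replace (w - w0) with ((z - z0) * (z * z0 - 1) / (2 * z * z0)) by (rewrite I1; field; auto).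
    field. auto. }
  rewrite Erem, Cmod_div, Cmod_opp, !Cmod_mult by (apply Cmult_neq_0; auto). fold c.
  set (a := Cmod (z - z0)) in *. set (e := Cmod (w - w0)) in *.
  pose proof (Cmod_ge_0 (z - z0)). pose proof (Cmod_ge_0 (w - w0)).
  assert (HL0 : (0 <= L)%R) by (unfold L; apply Rmult_le_pos; [lra|left; apply Rinv_0_lt_compat; lra]).
  apply (Rle_trans _ (a * a / c)).
  - apply Rmult_le_compat_l; [fold a; nra|]. apply Rinv_le_contravar; [lra|]. nra.
  - unfold Rdiv. replace (L * L * / c * (e * e))%R with ((L * e) * (L * e) * / c)%R by ring.
    apply Rmult_le_compat_r; [left; apply Rinv_0_lt_compat; exact Hc0|].
    apply Rmult_le_compat; fold a e; auto.
Qed.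

Lemma ex_derive_sigma (a : Z) (w : C) : (1 <= M)%nat -> (Rc < Cmod w)%R -> ex_derive (sigma s a) w.
Proof.
  intros HM Hw. assert (Hz : ex_derive zof w) by (eexists; exact (is_derive_zof w HM Hw)).
  unfold sigma, Cdiv.
  apply (ex_derive_Cmult (fun y => CpowZ s a * zof y + CpowZ s (- a) * / zof y) (fun _ => / 2));
    [|apply ex_derive_const].
  apply (ex_derive_plus (fun y => CpowZ s a * zof y) (fun y => CpowZ s (- a) * / zof y)).
  - apply (ex_derive_Cmult (fun _ => CpowZ s a) zof); [apply ex_derive_const|exact Hz].
  - apply (ex_derive_Cmult (fun _ => CpowZ s (- a)) (fun y => / zof y)); [apply ex_derive_const|].
    apply ex_derive_Cinv_comp; [exact Hz|apply zof_neq_0].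
Qed.

Lemma holo_on_disc_sigma_step (x : C) (k : Z) : (1 <= M)%nat -> (Rc < Cmod x)%R ->
  holo_on_disc (fun w => sigma s (k + 1) w - sigma s (k + -1) w) x (Cmod x - Rc).
Proof.
  intros HM Hx w Hw. pose proof (Cmod_gt_of_disc x w Rc Hw).
  apply (ex_derive_minus (sigma s (k + 1)) (sigma s (k + -1))); apply ex_derive_sigma; assumption.
Qed.

End Shifts.

Lemma forall_le_S_iff (P : nat -> Prop) (m : nat) :
  (forall t, (t <= S m)%nat -> P t) <-> P 0%nat /\ (forall t, (t <= m)%nat -> P (S t)).
Proof.
  split; [intros H; split; intros; apply H; lia|].
  intros [H0 HS] [|t] Ht; [exact H0|apply HS; lia].
Qed.

Section Orders.
Variables (s : C) (M : nat) (Rc : R).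
Hypothesis Hs : (Cmod s < 1)%R.
Hypothesis Hs0 : s <> 0.
Hypothesis HR : R_admissible s M Rc.
Variable x : C.
Hypothesis Hx : (Rc < Cmod x)%R.

Let P (m : nat) (g : C -> C) (j : nat) : C -> C := eta_qpow s (Z.of_nat m - 2 * Z.of_nat j) g.

Let step (m j : nat) (w : C) : C :=
  sigma s (Z.of_nat m - 2 * Z.of_nat j + 1) w - sigma s (Z.of_nat m - 2 * Z.of_nat j + -1) w.

Lemma Aop_eq_average (m : nat) (g : C -> C) (w : C) :
  Aop s (S m) g w = (P (S m) g 0%nat w + P (S m) g (S m) w) / 2.
Proof.
  unfold Aop, P, eta_qpow. repeat f_equal; lia.
Qed.

Lemma eta_qpow_AW_eq_divided_difference (m j : nat) (g : C -> C) (w : C) :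
  (S m <= M)%nat -> (j <= m)%nat -> (Rc < Cmod w)%R ->
  P m (AW s g) j w = (P (S m) g j w - P (S m) g (S j) w) / step m j w.
Proof.
  intros Hm Hj Hw. unfold P, step, eta_qpow at 1. rewrite (AW_sigma s M Rc Hs Hs0 HR) by (auto; lia).
  unfold eta_qpow.
  replace (Z.of_nat (S m) - 2 * Z.of_nat j)%Z with (Z.of_nat m - 2 * Z.of_nat j + 1)%Z by lia.
  replace (Z.of_nat (S m) - 2 * Z.of_nat (S j))%Z with (Z.of_nat m - 2 * Z.of_nat j + -1)%Z by lia.
  reflexivity.
Qed.

Lemma zero_order_ge_Aop_AWn_iff (m : nat) : (m <= M)%nat -> forall (g : C -> C) (n : nat),
  (forall t, (t <= m)%nat -> zero_order_ge (Aop s (m - t) (AWn s t g)) x n) <->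
  (forall j, (j <= m)%nat -> zero_order_ge (P m g j) x n).
Proof.
  assert (Hr : (0 < Cmod x - Rc)%R) by lra.
  induction m as [|m IH]; intros Hm g n.
  - assert (HP0 : forall w, P 0 g 0 w = g w) by (intros w; unfold P, eta_qpow; simpl; f_equal; apply sigma_0).
    split; intros H t Ht; replace t with 0%nat by lia; specialize (H 0%nat (le_n 0)).
    + apply (zero_order_ge_ext g); [intros w; symmetry; apply HP0|exact H].
    + apply (zero_order_ge_ext (P 0 g 0)); [exact HP0|exact H].
  - assert (Havg : zero_order_ge (Aop s (S m - 0) (AWn s 0 g)) x n <->
                   zero_order_ge (fun w => (P (S m) g 0%nat w + P (S m) g (S m) w) / 2) x n).
    { apply (zero_order_ge_near_iff _ _ x n 1); [lra|]. intros w _ _. apply Aop_eq_average. }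
    assert (Hshift : (forall t, (t <= m)%nat -> zero_order_ge (Aop s (S m - S t) (AWn s (S t) g)) x n)
                 <-> (forall t, (t <= m)%nat -> zero_order_ge (Aop s (m - t) (AWn s t (AW s g))) x n)).
    { unfold AWn. split; intros H t Ht; specialize (H t Ht); rewrite Nat.iter_succ_r in *; exact H. }
    assert (Hdiv : (forall j, (j <= m)%nat -> zero_order_ge (P m (AW s g) j) x n) <->
      (forall j, (j < S m)%nat ->
         zero_order_ge (fun w => (P (S m) g j w - P (S m) g (S j) w) / step m j w) x n)).
    { split; intros H j Hj; specialize (H j ltac:(lia));
        refine (proj1 (zero_order_ge_near_iff _ _ x n _ Hr _) H);
        intros w Hw _; pose proof (Cmod_gt_of_disc x w Rc Hw);
        [|symmetry]; apply eta_qpow_AW_eq_divided_difference; auto; lia. }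
    rewrite forall_le_S_iff, Havg, Hshift, (IH ltac:(lia) (AW s g) n), Hdiv.
    apply (zero_order_ge_divided_differences _ _ _ x (Cmod x - Rc)); [exact Hr| |].
    + intros j Hj. apply (holo_on_disc_sigma_step s M Rc Hs Hs0 HR); [lia|exact Hx].
    + intros j w Hj Hw. apply (sigma_succ_sub_pred_neq_0 s M Rc Hs Hs0 HR);
        [exact (Cmod_gt_of_disc x w Rc Hw)|lia].
Qed.

End Orders.

Lemma etaZ_eq_eta_qpow (s : C) (M : nat) (Rc : R) (f : C -> C) (w : C) (j : Z) :
  R_admissible s M Rc -> (Rc < Cmod w)%R -> (Z.abs j <= Z.of_nat M)%Z ->
  etaZ s j f w = eta_qpow s j f w.
Proof.
  intros [_ HR] Hw Hj. destruct (HR f w Hw) as [Hiter _].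
  destruct (Z_le_gt_dec 0 j) as [Hj0|Hj0].
  - replace j with (Z.of_nat (Z.to_nat j)) by lia. apply Hiter. lia.
  - replace j with (- Z.of_nat (Z.to_nat (- j)))%Z by lia. apply Hiter. lia.
Qed.

Theorem lemma5p2 (q s : C) (M : nat) (Rc : R) (f : C -> C) :
  (0 < Cmod q)%R -> (Cmod q < 1)%R -> s * s = q ->
  R_admissible s M Rc ->
  meromorphic f ->
  forall x : C, (Rc < Cmod x)%R ->
    min_upto M (fun t => nu0 (Aop s (M - t) (AWn s t f)) x)
    = min_upto M (fun t => nu0 (etaZ s (Z.of_nat M - 2 * Z.of_nat t) f) x).
Proof.
  intros Hq0 Hq1 Hsq HR _ x Hx.
  assert (Hs : (Cmod s < 1)%R) by (rewrite <- Hsq, Cmod_mult in Hq1; pose proof (Cmod_ge_0 s); nra).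
  assert (Hs0 : s <> 0) by (intros ->; rewrite <- Hsq, Cmult_0_l, Cmod_0 in Hq0; lra).
  apply min_upto_nu0_eq. intros n.
  rewrite (zero_order_ge_Aop_AWn_iff s M Rc Hs Hs0 HR x Hx M (le_n M) f n).
  split; intros H t Ht; specialize (H t Ht); revert H;
    apply (zero_order_ge_near_ext _ _ x n (Cmod x - Rc)); try lra;
    intros w Hw _; pose proof (Cmod_gt_of_disc x w Rc Hw);
    [symmetry|]; apply (etaZ_eq_eta_qpow s M Rc); auto; lia.
Qed.
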